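(* Let $A$ be a generator matrix of the repetition $[n_a,1,n_a]_q$ code and let $B$ be a parity-check matrix of a $q$-ary Hamming code with parameters $[n_b,k_b,3]_q$, where $n_b=(q^{m_b}-1)/(q-1)$ and $k_b=n_b-m_b$. Let $C$ be the linear code over $\mathbb{F}_q$ with parity-check matrix $H=A\otimes B$. Then: (i) $C$ has length $n=n_a n_b$, dimension $k=n-m_b$ and covering radius $\rho=1$; (ii) if $n_a>1$ then the minimum distance of $C$ is $d=2$, and if $n_a=1$ then $d=3$; (iii) $\mathrm{Aut}(C)$ is transitive, and consequently $C$ is completely transitive and completely regular.
   Context: $\mathbb{F}_q$ is the finite field with $q$ elements. The repetition $[n,1,n]_q$ code is $\{(c,\dots,c):c\in\mathbb{F}_q\}$. For $m\ge2$, a $q$-ary Hamming code of length $(q^m-1)/(q-1)$ is a linear code with an $m\times (q^m-1)/(q-1)$ parity-check matrix whose columns are nonzero and pairwise linearly independent. The Kronecker product $A\otimes B$ of $A=[a_{r,s}]$ and $B$ is obtained by replacing each entry $a_{r,s}$ by the block $a_{r,s}B$. Covering radius $\rho=\max_{\bf v}\min_{{\bf x}\in C}d({\bf v},{\bf x})$ (Hamming distance). A linear automorphism of $\mathbb{F}_q^n$ is ${\bf x}\mapsto {\bf x}M$ with $M$ a monomial matrix; $\mathrm{Aut}(C)$ is the group of linear automorphisms preserving $C$; it is called transitive if it acts transitively on the set of weight-one vectors of $\mathbb{F}_q^n$. $\mathrm{Aut}(C)$ acts on cosets by $\phi({\bf v}+C)=\phi({\bf v})+C$; $C$ is completely transitive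 if this action has exactly $\rho+1$ orbits. $C$ is completely regular if for every vector ${\bf x}$, with $t=d({\bf x},C)$, the number of codewords at distance $i$ from ${\bf x}$ depends only on $t$ and $i$. *)

From HB Require Import structures.
From mathcomp Require Import all_boot all_order all_algebra.
Set Implicit Arguments. Unset Strict Implicit. Unset Printing Implicit Defensive.
Import Order.TTheory GRing.Theory Num.Theory.
Local Open Scope ring_scope.

Lemma kdiv_lt m1 m2 (k : 'I_(m1 * m2)) : (k %/ m2 < m1)%N.
Proof.
have := ltn_ord k; move: (nat_of_ord k) => kk; clear k; case: m2 => [|m2]; first by rewrite muln0.
by rewrite ltn_divLR.
Qed.

Lemma kmod_lt m1 m2 (k : 'I_(m1 * m2)) : (k %% m2 < m2)%N.
Proof.
have := ltn_ord k; move: (nat_of_ord k) => kk; clear k; case: m2 => [|m2]; first by rewrite muln0.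
by rewrite ltn_mod.
Qed.

Definition kdiv m1 m2 (k : 'I_(m1 * m2)) : 'I_m1 := Ordinal (kdiv_lt k).
Definition kmod m1 m2 (k : 'I_(m1 * m2)) : 'I_m2 := Ordinal (kmod_lt k).

(* Kronecker product: the entry a_{r,s} of A is replaced by the block
   a_{r,s} B, so entry (r*m2 + i, s*n2 + j) of A (x) B is a_{r,s} * b_{i,j}. *)
Definition kron (R : pzRingType) m1 n1 m2 n2
  (A : 'M[R]_(m1, n1)) (B : 'M[R]_(m2, n2)) : 'M[R]_(m1 * m2, n1 * n2) :=
  \matrix_(i, j) (A (kdiv i) (kdiv j) * B (kmod i) (kmod j)).

Section Coding.
Variable F : finFieldType.

Definition wt n (x : 'rV[F]_n) : nat := #|[set i : 'I_n | x 0 i != 0]|.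
Definition hdist n (x y : 'rV[F]_n) : nat := wt (x - y).

(* A linear code of length n is represented by a matrix whose row space is
   the code; x is a codeword iff (x <= C)%MS. *)

(* The code with parity-check matrix H : {x | H x^T = 0} = {x | x H^T = 0}. *)
Definition code_of_pcm m n (H : 'M[F]_(m, n)) : 'M[F]_n := kermx H^T.

Definition code_dim n (C : 'M[F]_n) : nat := \rank C.

(* d(x, C) = min over codewords c of d(x, c) (the code contains 0, and every
   distance is <= n, so n is a neutral initial value). *)
Definition dist_to_code n (C : 'M[F]_n) (x : 'rV[F]_n) : nat :=
  \big[minn/n]_(c : 'rV[F]_n | (c <= C)%MS) hdist x c.

Definition covering_radius n (C : 'M[F]_n) : nat :=
  \max_(v : 'rV[F]_n) dist_to_code C v.

Definition is_min_distance n (C : 'M[F]_n) (d : nat) : Prop :=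
  (exists2 c : 'rV[F]_n, (c <= C)%MS && (c != 0) & wt c = d) /\
  (forall c : 'rV[F]_n, (c <= C)%MS -> c != 0 -> (d <= wt c)%N).

Definition repetition_code n : {set 'rV[F]_n} :=
  [set x | [exists c : F, x == const_mx c]].

Definition is_generator_matrix k n (G : 'M[F]_(k, n)) (S : {set 'rV[F]_n}) : Prop :=
  row_free G /\ (forall x : 'rV[F]_n, (x <= G)%MS = (x \in S)).

Definition is_hamming_pcm m n (B : 'M[F]_(m, n)) : Prop :=
  (2 <= m)%N /\ n = ((#|F| ^ m - 1) %/ (#|F| - 1))%N /\
  (forall j : 'I_n, col j B != 0) /\
  (forall j j' : 'I_n, j != j' -> row_free (col_mx (col j B)^T (col j' B)^T)).

Definition monomialb n (M : 'M[F]_n) : bool :=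
  [forall i, #|[set j | M i j != 0]| == 1%N] &&
  [forall j, #|[set i | M i j != 0]| == 1%N].

Definition in_Aut n (C : 'M[F]_n) (M : 'M[F]_n) : bool :=
  monomialb M && [forall x : 'rV[F]_n, (x <= C)%MS ==> (x *m M <= C)%MS].

Definition Aut_transitive n (C : 'M[F]_n) : Prop :=
  forall u v : 'rV[F]_n, wt u = 1%N -> wt v = 1%N ->
    exists2 M, in_Aut C M & u *m M = v.

(* Orbits of the action of Aut(C) on cosets v + C:
   phi(v + C) = vM + C; the orbit of v + C is the set of all vectors lying in
   some coset phi(v + C). *)
Definition coset_orbit n (C : 'M[F]_n) (v : 'rV[F]_n) : {set 'rV[F]_n} :=
  [set w | [exists M, in_Aut C M && (w - v *m M <= C)%MS]].

Definition num_coset_orbits n (C : 'M[F]_n) : nat :=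
  #|[set coset_orbit C v | v : 'rV[F]_n]|.

Definition completely_transitive n (C : 'M[F]_n) : Prop :=
  num_coset_orbits C = (covering_radius C).+1.

Definition num_at_dist n (C : 'M[F]_n) (x : 'rV[F]_n) (i : nat) : nat :=
  #|[set c : 'rV[F]_n | (c <= C)%MS && (hdist x c == i)]|.

Definition completely_regular n (C : 'M[F]_n) : Prop :=
  forall x y : 'rV[F]_n, dist_to_code C x = dist_to_code C y ->
    forall i, num_at_dist C x i = num_at_dist C y i.

End Coding.

(* Since [A = a (1, ..., 1)] with [a <> 0], a word [x] lies in [C] iff its syndrome
   [sum_l x_l b_(l mod nb)] vanishes, where the [b_j] are the columns of [B].  These
   columns are pairwise independent and their [(q - 1) nb = q^mb - 1] nonzero multiples
   exhaust the nonzero syndromes, so every nonzero syndrome is [c b_j] for a unique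
   [(j, c)].  This gives the rank, covering radius one (correct a single entry) and the
   minimum distances (two copies of a column in different blocks when [na > 1]; a
   dependency between three columns when [na = 1]).  An invertible [G] maps the columns
   to multiples of columns, and GL acts transitively on nonzero syndromes; lifting this
   column permutation to every block and swapping two blocks yields monomial
   automorphisms moving any weight-one vector to any other.  For a code of covering
   radius one this makes [Aut C] transitive on the nontrivial cosets, which is complete
   transitivity and implies complete regularity. *)

From HB Require Import structures.
From mathcomp Require Import all_boot all_order all_algebra.
From mathcomp Require Import perm.
Set Implicit Arguments. Unset Strict Implicit. Unset Printing Implicit Defensive.
Import GRing.Theory.
Local Open Scope ring_scope.

Lemma bigminn_le_cond (T : finType) (P : pred T) (f : T -> nat) x0 i0 :
  P i0 -> (\big[minn/x0]_(i | P i) f i <= f i0)%N.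
Proof.
move=> Pi0; have : i0 \in index_enum T by rewrite mem_index_enum.
elim: (index_enum T) => [|i r IHr] //; rewrite inE big_cons => /orP [/eqP <- | i0r].
  by rewrite Pi0 geq_minl.
by case: (P i); [apply: leq_trans (geq_minr _ _) (IHr i0r) | apply: IHr].
Qed.

Lemma mul_scale_delta_mx (R : pzRingType) n p (l : 'I_n) (c : R) (M : 'M[R]_(n, p)) :
  (c *: delta_mx 0 l) *m M = c *: row l M.
Proof. by rewrite -scalemxAl -rowE. Qed.

Section Weight.
Variable F : finFieldType.

Lemma wt_eq0 n (x : 'rV[F]_n) : (wt x == 0%N) = (x == 0).
Proof.
rewrite /wt cards_eq0; apply/eqP/eqP => [x0 | ->].
  apply/rowP => i; rewrite mxE; apply/eqP/negPn/negP => xi0.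
  by have := in_set0 i; rewrite -x0 inE xi0.
by apply/setP => i; rewrite !inE mxE eqxx.
Qed.

Lemma wt_support n (x : 'rV[F]_n) (S : {set 'I_n}) :
  (forall i, (x 0 i != 0) = (i \in S)) -> wt x = #|S|.
Proof. by move=> xS; rewrite /wt; apply: eq_card => i; rewrite inE xS. Qed.

Lemma wt_scale_delta n (l : 'I_n) (c : F) : c != 0 -> wt (c *: delta_mx 0 l) = 1%N.
Proof.
move=> c0; rewrite (@wt_support _ _ [set l]) ?cards1 // => i.
rewrite !inE !mxE eqxx /= mulf_eq0 (negPf c0) /=.
by case: (i == l); rewrite ?oner_eq0 ?eqxx.
Qed.

Lemma wt_eq1P n (x : 'rV[F]_n) :
  wt x = 1%N -> exists l c, c != 0 /\ x = c *: delta_mx 0 l.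
Proof.
move=> /eqP /cards1P [l xl].
have xl0 : x 0 l != 0 by have := set11 l; rewrite -xl inE.
exists l, (x 0 l); split => //; apply/rowP => i; rewrite !mxE eqxx /=.
have [<- | li] := eqVneq l i; first by rewrite mulr1.
rewrite mulr0; apply/eqP/negPn/negP => xi0.
by have := in_set1 i l; rewrite -xl inE xi0 eq_sym (negPf li).
Qed.

Lemma wt_eq2P n (x : 'rV[F]_n) : wt x = 2%N ->
  exists l1 l2 a1 a2, [/\ l1 != l2, a1 != 0, a2 != 0 &
                           x = a1 *: delta_mx 0 l1 + a2 *: delta_mx 0 l2].
Proof.
move=> /eqP /cards2P [l1 [l2 [l12 xl]]].
have x_supp i : (x 0 i != 0) = (i \in [set l1; l2]) by rewrite -xl inE.
exists l1, l2, (x 0 l1), (x 0 l2); rewrite !x_supp !inE !eqxx ?orbT; split=> //.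
apply/rowP => i; rewrite !mxE /=.
have [-> | il1] := eqVneq i l1; first by rewrite (negPf l12) mulr1 mulr0 addr0.
have [-> | il2] := eqVneq i l2; first by rewrite mulr1 mulr0 add0r.
rewrite !mulr0 addr0; apply/eqP/negPn/negP.
by rewrite x_supp !inE (negPf il1) (negPf il2).
Qed.

End Weight.

Section Monomial.
Variables (F : finFieldType) (n : nat).
Implicit Types (M : 'M[F]_n) (x y : 'rV[F]_n) (C : 'M[F]_n).

Lemma monomialP M : monomialb M ->
  exists r : 'I_n -> 'I_n, [/\ bijective r, forall j, M (r j) j != 0 &
     forall x j, (x *m M) 0 j = x 0 (r j) * M (r j) j].
Proof.
case/andP => /forallP Mrow /forallP Mcol.
have /fin_all_exists [r Mr1] : forall j, exists i, [set i | M i j != 0] = [set i].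
  by move=> j; apply/cards1P/Mcol.
have Mr j : M (r j) j != 0 by have := set11 (r j); rewrite -Mr1 inE.
have M0 i j : i != r j -> M i j = 0.
  move=> ij; apply/eqP/negPn/negP => Mij.
  by have := in_set1 i (r j); rewrite -Mr1 inE Mij (negPf ij).
have r_inj : injective r.
  move=> j j' rjj'; have /cards1P [k Mk] := Mrow (r j).
  have := in_set1 j k; have := in_set1 j' k.
  by rewrite -Mk !inE Mr rjj' Mr => /esym/eqP -> /esym/eqP ->.
exists r; split => //; first exact: injF_bij.
by move=> x j; rewrite mxE (bigD1 (r j)) //= big1 ?addr0 // => i /M0 ->; rewrite mulr0.
Qed.

Lemma monomial_mulmx_inj M x y : monomialb M -> x *m M = y *m M -> x = y.
Proof.
case/monomialP => r [[r' _ r'K] Mr xM] xyM; apply/rowP => i; rewrite -[i]r'K.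
by apply: (mulIf (Mr (r' i))); rewrite -!xM xyM.
Qed.

Lemma monomial_wt M x : monomialb M -> wt (x *m M) = wt x.
Proof.
case/monomialP => r [r_bij Mr xM].
rewrite /wt -[in RHS](card_preimset _ (bij_inj r_bij)); apply: eq_card => j.
by rewrite !inE xM mulf_eq0 (negPf (Mr j)) orbF.
Qed.

Lemma monomial1 : monomialb (1%:M : 'M[F]_n).
Proof.
apply/andP; split; apply/forallP => i; apply/cards1P; exists i; apply/setP => j;
  rewrite !inE !mxE ?[i == j]eq_sym; by case: (j == i); rewrite ?oner_eq0 ?eqxx.
Qed.

Lemma in_Aut1 C : in_Aut C 1%:M.
Proof. by rewrite /in_Aut monomial1; apply/forallP => x; rewrite mulmx1 implybb. Qed.

Lemma in_Aut_sub C M x : in_Aut C M -> (x <= C)%MS -> (x *m M <= C)%MS.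
Proof. by case/andP => _ /forallP /(_ x) /implyP. Qed.

Lemma in_Aut_subV C M x : in_Aut C M -> (x *m M <= C)%MS -> (x <= C)%MS.
Proof.
move=> AutM xMC; have monoM : monomialb M by case/andP: AutM.
pose SC := [set y : 'rV[F]_n | (y <= C)%MS].
have SCM : [set y *m M | y in SC] = SC.
  apply/eqP; rewrite eqEcard card_imset; last by move=> y z /monomial_mulmx_inj->.
  rewrite leqnn andbT; apply/subsetP => _ /imsetP [y + ->].
  by rewrite !inE; apply: in_Aut_sub.
have : x *m M \in SC by rewrite inE.
by rewrite -SCM => /imsetP [y]; rewrite inE => yC /(monomial_mulmx_inj monoM) ->.
Qed.

End Monomial.

Lemma dist_to_code_le (F : finFieldType) n (C : 'M[F]_n) v c :
  (c <= C)%MS -> (dist_to_code C v <= hdist v c)%N.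
Proof. exact: (@bigminn_le_cond _ (fun c => c <= C)%MS). Qed.

Section CoveringRadiusOne.
Variables (F : finFieldType) (n : nat) (C : 'M[F]_n).
Implicit Types v w x y c : 'rV[F]_n.
Hypothesis C_cover1 : forall v, ~~ (v <= C)%MS ->
  exists2 c, (c <= C)%MS & wt (v - c) = 1%N.

Lemma dist_to_code_cover1 v : dist_to_code C v = if (v <= C)%MS then 0%N else 1%N.
Proof.
rewrite /dist_to_code; case: ifPn => vC.
  apply/eqP; rewrite -leqn0 (leq_trans (dist_to_code_le v vC)) //.
  by rewrite /hdist subrr leqn0 wt_eq0.
have [c cC vc1] := C_cover1 vC; apply/eqP; rewrite eqn_leq.
rewrite (leq_trans (dist_to_code_le v cC)) /hdist ?vc1 //=.
apply: (big_ind (fun k => 0 < k)%N) => [||c' c'C].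
- by rewrite -vc1 /wt -[X in (_ <= X)%N]card_ord max_card.
- by move=> k1 k2; rewrite leq_min => ->.
by rewrite lt0n wt_eq0 subr_eq0; apply: contraNneq vC => ->.
Qed.

Lemma covering_radius_cover1 v : ~~ (v <= C)%MS -> covering_radius C = 1%N.
Proof.
move=> vC; apply/eqP; rewrite eqn_leq; apply/andP; split.
  by apply/bigmax_leqP => w _; rewrite dist_to_code_cover1; case: (w <= C)%MS.
by rewrite (leq_trans _ (leq_bigmax v)) // dist_to_code_cover1 (negPf vC).
Qed.

Hypothesis C_Aut_transitive : Aut_transitive C.

Lemma Aut_move_coset x y : (x <= C)%MS = (y <= C)%MS ->
  exists cx cy, exists2 M, in_Aut C M &
    [/\ (cx <= C)%MS, (cy <= C)%MS & (x - cx) *m M = y - cy].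
Proof.
have [xC | xC] := boolP (x <= C)%MS => yC.
  by exists x, y, 1%:M; rewrite ?in_Aut1 // !subrr mul0mx -yC.
have [cx cxC x1] := C_cover1 xC.
have [cy cyC y1] := C_cover1 (negbT (esym yC)).
have [M AutM xyM] := C_Aut_transitive x1 y1.
by exists cx, cy, M.
Qed.

Lemma num_at_dist_leq x y i : (x <= C)%MS = (y <= C)%MS ->
  (num_at_dist C x i <= num_at_dist C y i)%N.
Proof.
case/Aut_move_coset => cx [cy [M AutM [cxC cyC xyM]]].
have monoM : monomialb M by case/andP: AutM.
pose f c := (c - cx) *m M + cy.
have f_inj : injective f by move=> c1 c2 /addIr /(monomial_mulmx_inj monoM) /addIr.
rewrite /num_at_dist -(card_imset _ f_inj); apply: subset_leq_card.
apply/subsetP => z /imsetP [c]; rewrite !inE => /andP [cC /eqP xci] ->.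
rewrite addmx_sub ?in_Aut_sub ?addmx_sub ?eqmx_opp //=.
have -> : hdist y (f c) = hdist x c.
  rewrite /hdist /f -(subrK cy y) -xyM opprD addrACA subrr addr0 -mulmxBl.
  by rewrite opprB addrA subrK monomial_wt.
by rewrite xci.
Qed.

Lemma completely_regular_cover1 : completely_regular C.
Proof.
move=> x y; rewrite !dist_to_code_cover1 => dxy i.
have xyC : (x <= C)%MS = (y <= C)%MS by move: dxy; do 2 case: (_ <= C)%MS.
by apply/eqP; rewrite eqn_leq !num_at_dist_leq.
Qed.

Lemma coset_orbit_cover1 v : coset_orbit C v =
  [set w | (w <= C)%MS == (v <= C)%MS].
Proof.
apply/setP => w; rewrite !inE; apply/existsP/eqP => [[M /andP [AutM wvMC]] | wvC].
  have vMw : v *m M = w - (w - v *m M) by rewrite opprB addrC subrK.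
  apply/idP/idP => [wC | vC]; last by rewrite -(subrK (v *m M) w) addmx_sub ?in_Aut_sub.
  by apply: (in_Aut_subV AutM); rewrite vMw addmx_sub ?eqmx_opp.
have [cx [cy [M AutM [cxC cyC vwM]]]] := Aut_move_coset (esym wvC).
exists M; rewrite AutM /=.
have -> : w - v *m M = cy - cx *m M.
  by rewrite -(subrK cy w) -vwM mulmxBl addrAC [v *m M - _]addrC addrK addrC.
by rewrite addmx_sub ?eqmx_opp ?in_Aut_sub.
Qed.

Lemma completely_transitive_cover1 v0 : ~~ (v0 <= C)%MS -> completely_transitive C.
Proof.
move=> v0C; rewrite /completely_transitive /num_coset_orbits (covering_radius_cover1 v0C).
pose side b := [set w : 'rV[F]_n | (w <= C)%MS == b].
have -> : [set coset_orbit C v | v : 'rV[F]_n] = [set side true; side false].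
  apply/setP => X; rewrite !inE; apply/imsetP/idP => [[v _ ->] | ].
    by rewrite coset_orbit_cover1; case: (v <= C)%MS; rewrite eqxx ?orbT.
  case/orP => /eqP ->; [exists 0 | exists v0] => //; rewrite coset_orbit_cover1 ?sub0mx //.
  by rewrite (negPf v0C).
rewrite cards2; case: eqP => // /setP /(_ 0).
by rewrite !inE sub0mx.
Qed.

End CoveringRadiusOne.

Section PermScale.
Variables (F : finFieldType) (n : nat) (pi : 'I_n -> 'I_n) (lam : 'I_n -> F).

Definition perm_scale_mx : 'M[F]_n := \matrix_(l, l') (if l' == pi l then lam l else 0).

Lemma row_perm_scale_mx l : row l perm_scale_mx = lam l *: delta_mx 0 (pi l).
Proof. by apply/rowP => l'; rewrite !mxE eqxx /=; case: (l' == pi l); rewrite ?mulr1 ?mulr0. Qed.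

Lemma perm_scale_mx_monomial : injective pi -> (forall l, lam l != 0) ->
  monomialb perm_scale_mx.
Proof.
move=> pi_inj lam0; have [pi' piK pi'K] := injF_bij pi_inj.
apply/andP; split; apply/forallP => l; apply/cards1P.
  exists (pi l); apply/setP => l'; rewrite !inE mxE.
  by case: (l' == pi l); rewrite ?eqxx ?lam0.
exists (pi' l); apply/setP => l1; rewrite !inE mxE.
have -> : (l == pi l1) = (l1 == pi' l) by apply/eqP/eqP => [-> | ->]; rewrite ?piK ?pi'K.
by case: (l1 == pi' l); rewrite ?eqxx ?lam0.
Qed.

End PermScale.

Lemma unitmx_transitive (F : fieldType) m (w1 w2 : 'rV[F]_m) : w1 != 0 -> w2 != 0 ->
  exists2 G : 'M[F]_m, G \in unitmx & w1 *m G = w2.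
Proof.
have base (w : 'rV[F]_m) : w != 0 -> exists2 P : 'M[F]_m, P \in unitmx & pid_mx 1 *m P = w.
  move=> w0; have rk1 : \rank w = 1%N by apply/eqP; rewrite eqn_leq rank_leq_row lt0n mxrank_eq0.
  have := mulmx_ebase w; rewrite rk1 [col_ebase w]mx11_scalar mul_scalar_mx => wE.
  have cu : col_ebase w 0 0 \is a GRing.unit.
    by have := col_ebase_unit w; rewrite unitmxE det_mx11.
  exists (col_ebase w 0 0 *: row_ebase w); first by rewrite unitmxZ // row_ebase_unit.
  by rewrite -scalemxAr scalemxAl.
move=> /base [P1 P1u P1w] /base [P2 P2u P2w].
exists (invmx P1 *m P2); first by rewrite unitmx_mul unitmx_inv P1u P2u.
by rewrite mulmxA -P1w mulmxK.
Qed.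

Section HammingColumns.
Variables (F : finFieldType) (m n : nat) (B : 'M[F]_(m, n)).
Hypothesis B_hamming : is_hamming_pcm B.

Lemma hamming_length : n = (\sum_(i < m) #|F| ^ i)%N.
Proof.
case: B_hamming => _ [nE _]; rewrite {1}nE !subn1 predn_exp.
by rewrite mulKn // -subn1 subn_gt0 card_finNzRing_gt1.
Qed.

Lemma hamming_length_mul : (n * #|F|.-1)%N = (#|F| ^ m).-1.
Proof. by rewrite hamming_length mulnC predn_exp. Qed.

Lemma hamming_length_ge3 : (3 <= n)%N.
Proof.
case: B_hamming => m_ge2 _; rewrite hamming_length -(subnKC m_ge2).
rewrite !big_ord_recl expn0 expn1 addnA (leq_trans _ (leq_addr _ _)) //.
by rewrite ltnS card_finNzRing_gt1.
Qed.

Definition hcol (j : 'I_n) : 'rV[F]_m := (col j B)^T.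

Lemma hcol_neq0 j : hcol j != 0.
Proof.
case: B_hamming => _ [_ [Bj0 _]]; apply: contraNneq (Bj0 j) => hj0.
by rewrite -[col j B]trmxK -/(hcol j) hj0 trmx0.
Qed.

Lemma hcol_scale_eq j j' c : hcol j = c *: hcol j' -> j = j'.
Proof.
case: B_hamming => _ [_ [_ B_indep]] hjj'; apply/eqP/negPn/negP => /B_indep.
rewrite /row_free -/(hcol j) -/(hcol j') -addsmxE.
rewrite (addsmx_idPr _) ?hjj' ?scalemx_sub //.
by move/eqP => rk2; have := rank_leq_row (hcol j'); rewrite rk2.
Qed.

Lemma hcol_scale_inj j j' c c' : c != 0 -> c *: hcol j = c' *: hcol j' ->
  j = j' /\ c = c'.
Proof.
move=> c0 hjj'.
have jj' : j = j'.
  by apply: (@hcol_scale_eq _ _ (c^-1 * c')); rewrite -scalerA -hjj' scalerA mulVf ?scale1r.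
split=> //; subst j'; apply/eqP; rewrite -subr_eq0.
have : (c - c') *: hcol j == 0 by rewrite scalerBl hjj' subrr.
by rewrite scaler_eq0 (negPf (hcol_neq0 j)) orbF.
Qed.

(* The (q-1) n nonzero multiples of the columns are pairwise distinct, and there are
   q^m - 1 of them by the length formula: they exhaust the nonzero vectors. *)
Lemma hcol_cover (w : 'rV[F]_m) : w != 0 -> exists j c, w = c *: hcol j.
Proof.
move=> w0; pose D := setX [set: 'I_n] (~: [set (0 : F)]).
pose f (p : 'I_n * F) := p.2 *: hcol p.1.
have f_inj : {in D &, injective f}.
  by move=> [j c] [j' c']; rewrite !inE /f /= => c0 _ /(hcol_scale_inj c0) [-> ->].
have fD : f @: D = ~: [set 0].
  apply/eqP; rewrite eqEcard card_in_imset // cardsX cardsT card_ord !cardsC1 card_mx.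
  rewrite mul1n -hamming_length_mul leqnn andbT.
  apply/subsetP => z /imsetP [[j c]]; rewrite !inE /f /= => c0 ->.
  by rewrite scaler_eq0 negb_or c0 hcol_neq0.
have : w \in f @: D by rewrite fD !inE.
by case/imsetP => [[j c]] _ ->; exists j, c.
Qed.

Lemma hcol_sum3 : exists j1 j2 j3 c,
  [/\ j1 != j2, j1 != j3, j2 != j3, c != 0 & hcol j1 + hcol j2 = c *: hcol j3].
Proof.
have n_ge3 := hamming_length_ge3.
pose j1 : 'I_n := Ordinal (ltnW (ltnW n_ge3)); pose j2 : 'I_n := Ordinal (ltnW n_ge3).
have j12 : j1 != j2 by [].
have s0 : hcol j1 + hcol j2 != 0.
  apply: contra j12 => s0; apply/eqP/(@hcol_scale_eq _ _ (-1)); apply/eqP.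
  by rewrite scaleN1r -addr_eq0.
have [j3 [c s3]] := hcol_cover s0.
have c0 : c != 0 by apply: contraNneq s0 => c0; rewrite s3 c0 scale0r.
exists j1, j2, j3, c; split=> //; apply: contra j12 => /eqP j3E; rewrite -j3E in s3.
  apply/eqP/esym/(@hcol_scale_eq _ _ (c - 1)).
  by rewrite scalerBl scale1r -s3 addrAC subrr add0r.
by apply/eqP/(@hcol_scale_eq _ _ (c - 1)); rewrite scalerBl scale1r -s3 addrK.
Qed.

Lemma hcol_mulmx_unit (G : 'M[F]_m) : G \in unitmx ->
  exists sg : 'I_n -> 'I_n, exists2 lam : 'I_n -> F,
    injective sg /\ (forall j, lam j != 0) & forall j, hcol j *m G = lam j *: hcol (sg j).
Proof.
move=> Gu; have hG0 j : hcol j *m G != 0.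
  by apply: contraNneq (hcol_neq0 j) => hG0; rewrite -(mulmxK Gu (hcol j)) hG0 mul0mx.
have /fin_all_exists [p hGp] : forall j, exists p : 'I_n * F, hcol j *m G = p.2 *: hcol p.1.
  by move=> j; have [s [c ->]] := hcol_cover (hG0 j); exists (s, c).
have lam0 j : (p j).2 != 0 by apply: contraNneq (hG0 j) => c0; rewrite hGp c0 scale0r.
exists (fun j => (p j).1), (fun j => (p j).2) => //; split=> // j j' pjj'.
apply: (@hcol_scale_eq _ _ ((p j).2 / (p j').2)).
rewrite -[hcol j](mulmxK Gu) -[hcol j'](mulmxK Gu) !hGp pjj' -!scalemxAl scalerA.
by rewrite mulfVK.
Qed.

End HammingColumns.

Section KronIndex.
Variables m1 m2 : nat.

Lemma kidx_lt (r : 'I_m1) (j : 'I_m2) : (r * m2 + j < m1 * m2)%N.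
Proof.
by rewrite (leq_trans (_ : _ < r * m2 + m2)%N) ?ltn_add2l // -mulSnr leq_mul2r ltn_ord orbT.
Qed.

Definition kidx (r : 'I_m1) (j : 'I_m2) : 'I_(m1 * m2) := Ordinal (kidx_lt r j).

Lemma kdiv_kidx r j : kdiv (kidx r j) = r.
Proof.
by apply: val_inj => /=; rewrite divnMDl ?(leq_ltn_trans _ (ltn_ord j)) // divn_small ?addn0.
Qed.

Lemma kmod_kidx r j : kmod (kidx r j) = j.
Proof. by apply: val_inj => /=; rewrite modnMDl modn_small. Qed.

Lemma kidx_kdiv l : kidx (kdiv l) (kmod l) = l.
Proof. by apply: val_inj => /=; rewrite -divn_eq. Qed.

Lemma kidx_inj r j r' j' : kidx r j = kidx r' j' -> r = r' /\ j = j'.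
Proof.
move=> e; split; first by rewrite -(kdiv_kidx r j) e kdiv_kidx.
by rewrite -(kmod_kidx r j) e kmod_kidx.
Qed.

Lemma kmod_inj : m1 = 1%N -> injective (@kmod m1 m2).
Proof.
move=> m1E l l' ll'; rewrite -(kidx_kdiv l) -(kidx_kdiv l') ll'; congr kidx.
apply: val_inj; case: (kdiv l) (kdiv l') => [a ha] [b hb] /=.
by move: ha hb; rewrite m1E !ltnS !leqn0 => /eqP-> /eqP->.
Qed.

End KronIndex.

Lemma repetition_generator_const (F : finFieldType) n (A : 'M[F]_(1, n)) :
  is_generator_matrix A (repetition_code F n) -> exists2 a, a != 0 & A = const_mx a.
Proof.
case=> A_free A_span; have := A_span A.
rewrite submx_refl inE => /esym /existsP [a /eqP AE].
exists a => //; apply: contraTneq A_free => a0.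
by rewrite /row_free AE a0 (_ : const_mx 0 = 0) ?mxrank0 //; apply/rowP => i; rewrite !mxE.
Qed.

Section KronRepetition.
Variables (F : finFieldType) (na mb nb : nat) (B : 'M[F]_(mb, nb)).

(* Every block row of [const_mx a (x) B] is [a B], so for [a <> 0] the code is the kernel
   of this stacked copy of [B^T]. *)
Definition syndrome_mx : 'M[F]_(na * nb, mb) := \matrix_(l, i) B i (kmod l).

Lemma row_syndrome_mx l : row l syndrome_mx = hcol B (kmod l).
Proof. by apply/rowP => i; rewrite !mxE. Qed.

Lemma sub_kron_const_code a (x : 'rV[F]_(na * nb)) : a != 0 ->
  (x <= code_of_pcm (kron (const_mx a : 'M_(1, na)) B))%MS = (x *m syndrome_mx == 0).
Proof.
move=> a0.
have xHE i : (x *m (kron (const_mx a) B)^T) 0 i = a * (x *m syndrome_mx) 0 (kmod i).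
  by rewrite !mxE mulr_sumr; apply: eq_bigr => l _; rewrite !mxE mulrCA.
rewrite /code_of_pcm sub_kermx; apply/eqP/eqP => [xH0 | xS0]; apply/rowP => i.
  have i_lt : (i < 1 * mb)%N by rewrite mul1n.
  have := congr1 (fun y : 'M[F]_(1, 1 * mb) => y 0 (Ordinal i_lt)) xH0.
  rewrite /= xHE !mxE (_ : kmod _ = i); last by apply: val_inj; rewrite /= modn_small.
  by move/eqP; rewrite mulf_eq0 (negPf a0) => /eqP.
by rewrite xHE xS0 !mxE mulr0.
Qed.

End KronRepetition.

Section ProductCode.
Variables (F : finFieldType) (na mb nb : nat).
Variables (A : 'M[F]_(1, na)) (B : 'M[F]_(mb, nb)).
Hypothesis na_gt0 : (0 < na)%N.
Hypothesis A_rep : is_generator_matrix A (repetition_code F na).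
Hypothesis B_hamming : is_hamming_pcm B.

Implicit Types (x v : 'rV[F]_(na * nb)) (l : 'I_(na * nb)).

Local Notation C := (code_of_pcm (kron A B)).
Local Notation S := (@syndrome_mx F na mb nb B).
Local Notation b := (hcol B).

Let r0 : 'I_na := Ordinal na_gt0.
Let j0 : 'I_nb := Ordinal (leq_trans (isT : 0 < 3)%N (hamming_length_ge3 B_hamming)).

Lemma sub_code_syndrome x : (x <= C)%MS = (x *m S == 0).
Proof. by have [a a0 ->] := repetition_generator_const A_rep; apply: sub_kron_const_code. Qed.

Lemma syndrome_scale_delta l c : (c *: delta_mx 0 l) *m S = c *: b (kmod l).
Proof. by rewrite mul_scale_delta_mx row_syndrome_mx. Qed.

Lemma rank_syndrome : \rank S = mb.
Proof.
apply/eqP; rewrite -/(row_full S) -sub1mx; apply/row_subP => i.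
have /(hcol_cover B_hamming) [j [c ->]] : row i (1%:M : 'M[F]_mb) != 0.
  by apply/negP => /eqP /rowP /(_ i); rewrite !mxE eqxx => /eqP; rewrite oner_eq0.
by rewrite scalemx_sub // -(kmod_kidx r0 j) -row_syndrome_mx row_sub.
Qed.

Lemma code_dim_product : code_dim C = (na * nb - mb)%N.
Proof.
rewrite /code_dim -[in RHS]rank_syndrome -mxrank_ker; apply: eqmx_rank.
apply/andP; split; apply/row_subP => i.
  by rewrite sub_kermx -sub_code_syndrome row_sub.
by rewrite sub_code_syndrome -sub_kermx row_sub.
Qed.

Lemma product_cover1 v : ~~ (v <= C)%MS -> exists2 c, (c <= C)%MS & wt (v - c) = 1%N.
Proof.
rewrite sub_code_syndrome => vS0; have [j [c vSE]] := hcol_cover B_hamming vS0.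
have c0 : c != 0 by apply: contraNneq vS0 => c0; rewrite vSE c0 scale0r.
exists (v - c *: delta_mx 0 (kidx r0 j)).
  by rewrite sub_code_syndrome mulmxBl syndrome_scale_delta kmod_kidx vSE subrr.
by rewrite opprB addrC subrK wt_scale_delta.
Qed.

Lemma delta_notin_code l : ~~ ((delta_mx 0 l : 'rV[F]_(na * nb)) <= C)%MS.
Proof.
by rewrite sub_code_syndrome -[delta_mx 0 l]scale1r syndrome_scale_delta scale1r hcol_neq0.
Qed.

Lemma covering_radius_product : covering_radius C = 1%N.
Proof. exact: (covering_radius_cover1 product_cover1 (delta_notin_code (kidx r0 j0))). Qed.

Lemma product_wt_ge2 x : (x <= C)%MS -> x != 0 -> (2 <= wt x)%N.
Proof.
move=> xC x0; rewrite ltn_neqAle eq_sym lt0n wt_eq0 x0 andbT.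
apply/eqP => /wt_eq1P [l [a [a0 xE]]]; move: xC; rewrite sub_code_syndrome xE.
by rewrite syndrome_scale_delta scaler_eq0 (negPf a0) (negPf (hcol_neq0 _ _)).
Qed.

Lemma min_distance_product2 : (1 < na)%N -> is_min_distance C 2.
Proof.
move=> na_gt1; split; last exact: product_wt_ge2.
pose l0 := kidx r0 j0; pose l1 := kidx (Ordinal na_gt1) j0.
have l01 : l0 != l1 by apply/eqP => /kidx_inj [].
pose x := delta_mx 0 l0 - delta_mx 0 l1 : 'rV[F]_(na * nb).
have x_supp i : (x 0 i != 0) = (i \in [set l0; l1]).
  rewrite !inE !mxE /=.
  case: (eqVneq i l0) => [-> | _]; first by rewrite (negPf l01) subr0 oner_eq0.
  by case: (eqVneq i l1); rewrite ?sub0r ?oppr_eq0 ?oner_eq0 ?subrr ?eqxx.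
exists x; last by rewrite (wt_support x_supp) cards2 l01.
rewrite -wt_eq0 (wt_support x_supp) cards2 l01 andbT.
rewrite sub_code_syndrome mulmxBl -[delta_mx 0 l0]scale1r -[delta_mx 0 l1]scale1r.
by rewrite !syndrome_scale_delta !kmod_kidx subrr.
Qed.

Lemma product_wt_neq2 x : na = 1%N -> (x <= C)%MS -> wt x != 2%N.
Proof.
move=> na1 xC; apply/eqP => /wt_eq2P [l1 [l2 [a1 [a2 [l12 a10 a20 xE]]]]].
move: xC; rewrite sub_code_syndrome xE mulmxDl !syndrome_scale_delta addr_eq0 => /eqP s12.
have /(hcol_scale_eq B_hamming) /(kmod_inj na1) l12E : b (kmod l1) = (a1^-1 * - a2) *: b (kmod l2).
  by rewrite -scalerA scaleNr -s12 scalerA mulVf ?scale1r.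
by rewrite l12E eqxx in l12.
Qed.

Lemma min_distance_product3 : na = 1%N -> is_min_distance C 3.
Proof.
move=> na1; split; last first.
  move=> x xC x0; rewrite ltn_neqAle product_wt_ge2 // andbT eq_sym.
  exact: product_wt_neq2.
have [j1 [j2 [j3 [c [j12 j13 j23 c0 s3]]]]] := hcol_sum3 B_hamming.
pose l1 := kidx r0 j1; pose l2 := kidx r0 j2; pose l3 := kidx r0 j3.
have l_neq (j j' : 'I_nb) : j != j' -> kidx r0 j != kidx r0 j'.
  by apply: contra => /eqP /kidx_inj [_ ->].
have l12 : l1 != l2 := l_neq _ _ j12.
have l13 : l1 != l3 := l_neq _ _ j13.
have l23 : l2 != l3 := l_neq _ _ j23.
pose x := delta_mx 0 l1 + delta_mx 0 l2 - c *: delta_mx 0 l3 : 'rV[F]_(na * nb).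
have x_supp i : (x 0 i != 0) = (i \in [set l1; l2; l3]).
  rewrite !inE !mxE /=; have [-> | _] := eqVneq i l1.
    by rewrite (negPf l12) (negPf l13) mulr0 subr0 addr0 oner_eq0.
  have [-> | _] := eqVneq i l2; first by rewrite (negPf l23) mulr0 subr0 add0r oner_eq0.
  by case: (eqVneq i l3); rewrite ?mulr1 ?mulr0 ?add0r ?sub0r ?oppr_eq0 ?subr0 ?eqxx.
have wt_x : wt x = 3%N.
  rewrite (wt_support x_supp) setUC cardsU1 cards2 !inE [l3 == l1]eq_sym [l3 == l2]eq_sym.
  by rewrite l12 (negPf l13) (negPf l23).
exists x; last exact: wt_x.
rewrite -wt_eq0 wt_x andbT sub_code_syndrome /x mulmxBl mulmxDl.
rewrite -[delta_mx 0 l1]scale1r -[delta_mx 0 l2]scale1r !syndrome_scale_delta.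
by rewrite !kmod_kidx !scale1r s3 subrr.
Qed.

Lemma in_Aut_product M (G : 'M[F]_mb) : monomialb M -> M *m S = S *m G -> in_Aut C M.
Proof.
move=> monoM MS; rewrite /in_Aut monoM; apply/forallP => x; apply/implyP.
by rewrite !sub_code_syndrome -mulmxA MS mulmxA => /eqP->; rewrite mul0mx.
Qed.

Lemma Aut_transitive_product : Aut_transitive C.
Proof.
move=> u v /wt_eq1P [k [al [al0 ->]]] /wt_eq1P [k' [be [be0 ->]]].
have nz (c : F) j : c != 0 -> c *: b j != 0.
  by rewrite scaler_eq0 negb_or (hcol_neq0 B_hamming) andbT.
have [G Gu GE] := unitmx_transitive (nz al (kmod k) al0) (nz be (kmod k') be0).
have [sg [lam [sg_inj lam0] bGE]] := hcol_mulmx_unit B_hamming Gu.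
have [sgk lamk] : sg (kmod k) = kmod k' /\ lam (kmod k) = al^-1 * be.
  apply: (hcol_scale_inj B_hamming (lam0 _)); rewrite -bGE -scalerA -GE -scalemxAl.
  by rewrite scalerA mulVf ?scale1r.
pose pi l := kidx (tperm (kdiv k) (kdiv k') (kdiv l)) (sg (kmod l)).
have pi_inj : injective pi.
  move=> l l' /kidx_inj [/perm_inj kdivE /sg_inj kmodE].
  by rewrite -(kidx_kdiv l) -(kidx_kdiv l') kdivE kmodE.
pose M := perm_scale_mx pi (lam \o @kmod na nb).
exists M.
  apply: (@in_Aut_product _ G).
    exact: perm_scale_mx_monomial pi_inj (fun l => lam0 (kmod l)).
  apply/row_matrixP => l; rewrite !row_mul row_perm_scale_mx mul_scale_delta_mx.
  by rewrite !row_syndrome_mx kmod_kidx bGE.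
rewrite mul_scale_delta_mx row_perm_scale_mx scalerA /= lamk mulrA mulfV // mul1r.
by rewrite /pi tpermL sgk kidx_kdiv.
Qed.

Lemma completely_regular_product : completely_regular C.
Proof. exact: completely_regular_cover1 product_cover1 Aut_transitive_product. Qed.

Lemma completely_transitive_product : completely_transitive C.
Proof.
exact: completely_transitive_cover1 product_cover1 Aut_transitive_product
  _ (delta_notin_code (kidx r0 j0)).
Qed.

End ProductCode.

Theorem theorem3p4 (F : finFieldType) (na mb nb : nat)
  (A : 'M[F]_(1, na)) (B : 'M[F]_(mb, nb)) :
  (0 < na)%N ->
  is_generator_matrix A (repetition_code F na) ->
  is_hamming_pcm B ->
  let H := kron A B in
  let C := code_of_pcm H in
  (* (i) length n = na * nb is the ambient dimension of C : 'M_(na * nb) *)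
  (code_dim C = (na * nb - mb)%N /\ covering_radius C = 1%N) /\
  (* (ii) *)
  (((1 < na)%N -> is_min_distance C 2) /\ (na = 1%N -> is_min_distance C 3)) /\
  (* (iii) *)
  [/\ Aut_transitive C, completely_transitive C & completely_regular C].
Proof.
move=> na_gt0 A_rep B_hamming H C.
split; [split | split; [split | split]].
- by apply: code_dim_product.
- by apply: covering_radius_product.
- by apply: min_distance_product2.
- by apply: min_distance_product3.
- by apply: Aut_transitive_product.
- by apply: completely_transitive_product.
- by apply: completely_regular_product.
Qed.
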